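(* Assume the MDP satisfies the low-rank assumption with parameter $d$. In the infinite-sample setting, run the evaluation algorithm with weight matrices $\rho_t = d_t^{\pi^\beta}$ for $t\in[H]$ and with the infinite-sample matrix estimation subroutine. Then the output $\widehat J$ satisfies \[ \big|\widehat J - J^{\pi^\theta}\big| \le 2H\sqrt{dSA}\,\sum_{t=1}^{H}\operatorname{Dis}\big(d_t^{\pi^\beta}, d_t^{\pi^\theta}\big). \]
   Context: MDP: finite state space $\mathcal S$ with $S=|\mathcal S|$, finite action space $\mathcal A$ with $A=|\mathcal A|$, horizon $H$, transition kernels $P_t(\cdot\mid s,a)\in\Delta(\mathcal S)$, rewards $r_t:\mathcal S\times\mathcal A\to[0,1]$ for $t\in[H]$, initial state distribution $\mu_1$. A policy is $\pi=\{\pi_t:\mathcal S\to\Delta(\mathcal A)\}_{t\in[H]}$; under $\pi$, $s_1\sim\mu_1$, $a_t\sim\pi_t(\cdot\mid s_t)$, $s_{t+1}\sim P_t(\cdot\mid s_t,a_t)$. Let $d_t^\pi(s,a)=\Pr_\pi(s_t=s,a_t=a)$ and $J^\pi=\mathbb E_\pi[\sum_{t=1}^H r_t(s_t,a_t)]$. Functions on $\mathcal S\times\mathcal A$ (including distributions on $\mathcal S\times\mathcal A$) are viewed as real $S\times A$ matrices. $\pi^\theta$ is the target policy, $\pi^\beta$ the behavior policy. Low-rank assumption with parameter $d$: with $d'=\lfloor d/2\rfloor$, for every $t$, $r_t$ has rank at most $d'$, and there are real functions $u_{t,i},w_{t,i}$ such that either $P_t(s'\mid s,a)=\sum_{i=1}^{d'}u_{t,i}(s',s)w_{t,i}(a)$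 for all $s',s,a$, or $P_t(s'\mid s,a)=\sum_{i=1}^{d'}u_{t,i}(s)w_{t,i}(s',a)$ for all $s',s,a$. Notation: $\|\cdot\|_{\mathrm{op}}$ is the largest singular value, $\|M\|_\infty=\max_{i,j}|M_{ij}|$, $\|M\|_{\max}=\min_{U,V:\,M=UV^\top}\|U\|_{2\to\infty}\|V\|_{2\to\infty}$ where $\|\cdot\|_{2\to\infty}$ is the maximum row Euclidean norm; $\mathbb 1_M$ is the $0/1$ matrix indicating $\operatorname{supp}(M)=\{(i,j):M_{ij}\neq0\}$; $\circ$ is the entrywise product. Operator discrepancy: for $p,q\in\Delta(\mathcal S\times\mathcal A)$, $\operatorname{Dis}(p,q)=\min\{\|g-q\|_{\mathrm{op}}: g\in\Delta(\mathcal S\times\mathcal A),\ \operatorname{supp}(g)\subseteq\operatorname{supp}(p)\}$. Evaluation algorithm (inputs: target policy $\pi^\theta$, $\mu_1$, weight matrices $\rho_t$, estimated transitions $\widehat P_t$, subroutine $\mathrm{ME}$): set $\widehat Q_{H+1}=0$; for $t=H,H-1,\dots,1$: set $Z_t(s,a)=r_t(s,a)+\sum_{s',a'}\widehat P_t(s'\mid s,a)\pi^\theta_{t+1}(a'\mid s')\widehat Q_{t+1}(s',a')$ for $(s,a)\in\operatorname{supp}(\rho_t)$, then $\widehat Q_t=\mathrm{ME}(\rho_t,Z_t)$. Output $\widehat J=\sum_{s,a}\mu_1(s)\pi_1^\theta(a\mid s)\widehat Q_1(s,a)$. (For $t=H$ the sum vanishes since $\widehat Q_{H+1}=0$.) Define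 also $Y_t(s,a)=r_t(s,a)+\sum_{s',a'}P_t(s'\mid s,a)\pi^\theta_{t+1}(a'\mid s')\widehat Q_{t+1}(s',a')$ for all $(s,a)$. Infinite-sample setting: $\widehat P_t(\cdot\mid s,a)=P_t(\cdot\mid s,a)$ for all $(s,a)\in\operatorname{supp}(d_t^{\pi^\beta})$ (so $Z_t=Y_t$ on $\operatorname{supp}(\rho_t)$ when $\rho_t=d_t^{\pi^\beta}$), and the infinite-sample subroutine $\mathrm{ME}(\rho_t,Y_t)$ returns a minimizer of $\|M\|_{\max}$ over $M\in\mathbb R^{S\times A}$ subject to $\mathbb 1_{\rho_t}\circ M=\mathbb 1_{\rho_t}\circ Y_t$ and $\|M\|_\infty\le H-t+1$. *)

From HB Require Import structures.
From mathcomp Require Import all_boot all_order all_algebra.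
From mathcomp Require Import boolp classical_sets reals.
Set Implicit Arguments. Unset Strict Implicit. Unset Printing Implicit Defensive.
Import Order.TTheory GRing.Theory Num.Theory.
Local Open Scope ring_scope.
Local Open Scope classical_set_scope.

(* Time steps are natural numbers; only t in [1, H] (and t = H+1 for the
   terminal value) are meaningful.  Conventions:
     P t s a s'   = P_t(s' | s, a)
     pi t s a     = pi_t(a | s)
     r t s a      = r_t(s, a)                                            *)

Definition is_dist (R : realType) (T : finType) (p : T -> R) : Prop :=
  (forall x, 0 <= p x) /\ \sum_(x : T) p x = 1.

Definition is_dist2 (R : realType) (St Ac : finType) (g : St -> Ac -> R) : Prop :=
  (forall s a, 0 <= g s a) /\ \sum_(s : St) \sum_(a : Ac) g s a = 1.

Definition mx_of (R : realType) (St Ac : finType) (M : St -> Ac -> R)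
  : 'M[R]_(#|St|, #|Ac|) :=
  \matrix_(i < #|St|, j < #|Ac|) M (enum_val i) (enum_val j).

Definition opnorm (R : realType) (St Ac : finType) (M : St -> Ac -> R) : R :=
  sup [set y : R | exists x : Ac -> R,
         \sum_(a : Ac) x a ^+ 2 <= 1 /\
         y = Num.sqrt (\sum_(s : St) (\sum_(a : Ac) M s a * x a) ^+ 2)].

Definition supnorm (R : realType) (St Ac : finType) (M : St -> Ac -> R) : R :=
  \big[Num.max/0]_(s : St) \big[Num.max/0]_(a : Ac) `|M s a|.

Definition rownorm_max (R : realType) (T : finType) (k : nat) (U : T -> 'I_k -> R) : R :=
  \big[Num.max/0]_(x : T) Num.sqrt (\sum_(i < k) U x i ^+ 2).

Definition maxnorm (R : realType) (St Ac : finType) (M : St -> Ac -> R) : R :=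
  inf [set y : R | exists (k : nat) (U : St -> 'I_k -> R) (V : Ac -> 'I_k -> R),
         (forall s a, M s a = \sum_(i < k) U s i * V a i) /\
         y = rownorm_max U * rownorm_max V].

Definition Dis (R : realType) (St Ac : finType) (p q : St -> Ac -> R) : R :=
  inf [set y : R | exists g : St -> Ac -> R,
         is_dist2 g /\ (forall s a, g s a != 0 -> p s a != 0) /\
         y = opnorm (fun s a => g s a - q s a)].

(* state_dist mu1 P pi n s = Pr_pi(s_{n+1} = s) *)
Fixpoint state_dist (R : realType) (St Ac : finType) (mu1 : St -> R)
  (P : nat -> St -> Ac -> St -> R) (pi : nat -> St -> Ac -> R) (n : nat) : St -> R :=
  match n with
  | 0 => mu1
  | n'.+1 => fun s' => \sum_(s : St) \sum_(a : Ac)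
              state_dist mu1 P pi n' s * pi n'.+1 s a * P n'.+1 s a s'
  end.

(* occ mu1 P pi t s a = d_t^pi(s, a) = Pr_pi(s_t = s, a_t = a), for t >= 1 *)
Definition occ (R : realType) (St Ac : finType) (mu1 : St -> R)
  (P : nat -> St -> Ac -> St -> R) (pi : nat -> St -> Ac -> R) (t : nat)
  : St -> Ac -> R :=
  fun s a => state_dist mu1 P pi t.-1 s * pi t s a.

Definition value (R : realType) (St Ac : finType) (H : nat) (mu1 : St -> R)
  (P : nat -> St -> Ac -> St -> R) (r : nat -> St -> Ac -> R)
  (pi : nat -> St -> Ac -> R) : R :=
  \sum_(1 <= t < H.+1) \sum_(s : St) \sum_(a : Ac) occ mu1 P pi t s a * r t s a.

Definition low_rank (R : realType) (St Ac : finType) (H d : nat)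
  (P : nat -> St -> Ac -> St -> R) (r : nat -> St -> Ac -> R) : Prop :=
  forall t, (1 <= t <= H)%N ->
    (\rank (mx_of (r t)) <= d./2)%N /\
    ((exists (u : 'I_(d./2) -> St -> St -> R) (w : 'I_(d./2) -> Ac -> R),
        forall s' s a, P t s a s' = \sum_(i < d./2) u i s' s * w i a) \/
     (exists (u : 'I_(d./2) -> St -> R) (w : 'I_(d./2) -> St -> Ac -> R),
        forall s' s a, P t s a s' = \sum_(i < d./2) u i s * w i s' a)).

Definition ME_feasible (R : realType) (St Ac : finType) (H t : nat)
  (rho Z M : St -> Ac -> R) : Prop :=
  (forall s a, rho s a != 0 -> M s a = Z s a) /\
  (forall s a, `|M s a| <= H%:R - t%:R + 1).

Definition ME_output (R : realType) (St Ac : finType) (H t : nat)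
  (rho Z M : St -> Ac -> R) : Prop :=
  ME_feasible H t rho Z M /\
  (forall M', ME_feasible H t rho Z M' -> maxnorm M <= maxnorm M').

(* Let Y_t be the Bellman backup of Qhat_{t+1} under the true kernel.  The
   error telescopes: Jhat - J = sum_t <d_t^theta, Qhat_t - Y_t>.  Since Phat = P
   on supp d_t^beta, Y_t is feasible for the max-norm program, so Qhat_t = Y_t
   there and ||Qhat_t||_max <= ||Y_t||_max.  Any distribution g supported on
   supp d_t^beta is thus orthogonal to Qhat_t - Y_t, and the t-th term equals
   <g - d_t^theta, Qhat_t - Y_t> <= ||g - d_t^theta||_op sqrt(SA)
   (||Qhat_t||_max + ||Y_t||_max).  Finally Y_t has rank at most d and entries
   at most H - t + 1 <= H, and ||M||_max <= sqrt(rank M) ||M||_inf: factor M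
   through a row basis Y whose columns are weighted by a design lam nearly
   maximising det (Y diag(lam) Y^T); at such a design every leverage is at most
   rank M + dl (Kiefer-Wolfowitz). *)

From HB Require Import structures.
From mathcomp Require Import all_boot all_order all_algebra.
From mathcomp Require Import classical_sets reals.
From mathcomp Require Import perm ring lra.
Set Implicit Arguments.
Unset Strict Implicit.
Unset Printing Implicit Defensive.
Import Order.TTheory GRing.Theory Num.Theory.
Local Open Scope ring_scope.
Local Open Scope classical_set_scope.

Section SumOfSquares.
Context {R : realDomainType}.

Lemma sumr_sqr_ge0 {I : finType} (F : I -> R) : 0 <= \sum_i F i ^+ 2.
Proof. by apply: sumr_ge0 => i _; exact: sqr_ge0. Qed.

Lemma sumr_sqr_eq0 {I : finType} (F : I -> R) : \sum_i F i ^+ 2 = 0 -> forall i, F i = 0.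
Proof.
move=> F0 i; apply/eqP; rewrite -sqrf_eq0; apply/eqP.
exact: (psumr_eq0P (P := predT) (fun i _ => sqr_ge0 (F i)) F0).
Qed.

Lemma ler_sum_term {I : finType} (F : I -> R) (i0 : I) :
  (forall i, 0 <= F i) -> F i0 <= \sum_i F i.
Proof. by move=> F0; rewrite (bigD1 i0) //= lerDl sumr_ge0. Qed.

Lemma cauchy_schwarz_sqr {I : finType} (a b : I -> R) :
  (\sum_i a i * b i) ^+ 2 <= (\sum_i a i ^+ 2) * (\sum_i b i ^+ 2).
Proof.
set A := \sum_i a i ^+ 2; set B := \sum_i b i ^+ 2; set C := \sum_i a i * b i.
have A0 : 0 <= A := sumr_sqr_ge0 a.
have [A_eq0 | A_neq0] := eqVneq A 0.
  rewrite /C big1 ?expr0n ?mulr0n ?mulr_ge0 ?sumr_sqr_ge0 // => i _.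
  by rewrite (sumr_sqr_eq0 A_eq0) mul0r.
have expand x z : \sum_i (x * b i - z * a i) ^+ 2
    = x ^+ 2 * B - 2 * x * z * C + z ^+ 2 * A.
  rewrite !mulr_sumr -sumrB -big_split /=.
  by apply: eq_bigr => i _; ring.
have lagrange : \sum_i (A * b i - C * a i) ^+ 2 = A * (A * B - C ^+ 2).
  by rewrite expand; ring.
have : 0 <= A * (A * B - C ^+ 2) by rewrite -lagrange sumr_sqr_ge0.
by rewrite pmulr_rge0 ?subr_ge0 // lt_def A_neq0.
Qed.

End SumOfSquares.

Section Euclidean.
Context {R : rcfType}.

Definition l2norm {I : finType} (x : I -> R) : R := Num.sqrt (\sum_i x i ^+ 2).

Lemma l2norm_ge0 {I : finType} (x : I -> R) : 0 <= l2norm x.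
Proof. exact: sqrtr_ge0. Qed.

Lemma cauchy_schwarz {I : finType} (a b : I -> R) :
  `|\sum_i a i * b i| <= l2norm a * l2norm b.
Proof.
rewrite -sqrtrM ?sumr_sqr_ge0 // -sqrtr_sqr ler_sqrt ?cauchy_schwarz_sqr //.
by rewrite mulr_ge0 ?sumr_sqr_ge0.
Qed.

End Euclidean.

Section RankOneUpdate.
Context {R : comUnitRingType}.

Lemma det_1_add_rank1 k (u : 'cV[R]_k) (v : 'rV[R]_k) :
  \det (1%:M + u *m v) = 1 + (v *m u) 0 0.
Proof.
pose L : 'M[R]_(k + 1) := block_mx 1%:M 0 v 1%:M.
pose X : 'M[R]_(k + 1) := block_mx (1%:M + u *m v) u 0 1%:M.
pose L' : 'M[R]_(k + 1) := block_mx 1%:M 0 (- v) 1%:M.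
have LXL' : L *m X *m L' = block_mx 1%:M u 0 (1%:M + v *m u).
  rewrite /L /X /L' !mulmx_block !mul1mx !mul0mx !mulmx0 !mulmx1 !addr0 !add0r.
  congr block_mx.
  - by rewrite mulmxN addrK.
  - by rewrite mulmxN mulmxDr mulmx1 mulmxDl mul1mx mulmxA [v + _]addrC subrr.
  - by rewrite addrC.
have := congr1 determinant LXL'.
rewrite !det_mulmx /L /X /L' !det_lblock !det_ublock !det1 !mul1r !mulr1 => ->.
by rewrite det_mx11 !mxE eqxx mulr1n.
Qed.

Lemma det_add_rank1 k (G : 'M[R]_k) (y : 'cV[R]_k) (a : R) :
  G \in unitmx ->
  \det (G + a *: (y *m y^T)) = \det G * (1 + a * (y^T *m invmx G *m y) 0 0).
Proof.
move=> G_unit.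
have -> : G + a *: (y *m y^T) = G *m (1%:M + (a *: (invmx G *m y)) *m y^T).
  by rewrite mulmxDr mulmx1 -scalemxAl -scalemxAr !mulmxA mulmxV // mul1mx.
by rewrite det_mulmx det_1_add_rank1 -scalemxAr mxE mulmxA.
Qed.

End RankOneUpdate.

Lemma det_norm_le {R : numDomainType} k (A : 'M[R]_k) (C : R) :
  (forall i j, `|A i j| <= C) -> `|\det A| <= #|{perm 'I_k}|%:R * C ^+ k.
Proof.
move=> A_le; rewrite /determinant.
apply: le_trans (ler_norm_sum _ _ _) _.
rewrite mulr_natl -sumr_const; apply: ler_sum => s _.
rewrite normrM normr_sign mul1r normr_prod -[k in C ^+ k]card_ord -prodr_const.
by apply: ler_prod => i _; rewrite normr_ge0 A_le.
Qed.

Section WeightedGram.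
Context {R : realFieldType}.

Definition wgram {k n : nat} (Y : 'M[R]_(k, n)) (lam : 'I_n -> R) : 'M[R]_k :=
  Y *m diag_mx (\row_l lam l) *m Y^T.

Definition leverage {k n : nat} (Y : 'M[R]_(k, n)) (lam : 'I_n -> R) (j : 'I_n) : R :=
  (Y^T *m invmx (wgram Y lam) *m Y) j j.

Lemma wgramE k n (Y : 'M[R]_(k, n)) lam p q :
  wgram Y lam p q = \sum_l lam l * Y p l * Y q l.
Proof.
rewrite /wgram mul_mx_diag !mxE; apply: eq_bigr => l _; rewrite !mxE; ring.
Qed.

Lemma wgram_const k n (Y : 'M[R]_(k, n)) (c : R) :
  wgram Y (fun _ => c) = c *: (Y *m Y^T).
Proof.
apply/matrixP => p q; rewrite wgramE !mxE mulr_sumr.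
by apply: eq_bigr => l _; rewrite !mxE; ring.
Qed.

Lemma wgram_mix k n (Y : 'M[R]_(k, n)) lam (al be : R) (j : 'I_n) :
  wgram Y (fun l => al * lam l + be * (l == j)%:R)
  = al *: wgram Y lam + be *: (col j Y *m (col j Y)^T).
Proof.
apply/matrixP => p q; rewrite wgramE [RHS]mxE [X in X + _]mxE [X in _ + X]mxE.
rewrite wgramE !mxE big_ord1 !mxE mulr_sumr.
transitivity (\sum_l al * (lam l * Y p l * Y q l)
              + \sum_l be * (l == j)%:R * Y p l * Y q l).
  by rewrite -big_split /=; apply: eq_bigr => l _; ring.
congr (_ + _); rewrite (bigD1 j) //= eqxx mulr1 big1 ?addr0 ?mulrA //.
by move=> l /negPf ->; rewrite mulr0 !mul0r.
Qed.

Lemma leverage_col k n (Y : 'M[R]_(k, n)) lam (j : 'I_n) :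
  ((col j Y)^T *m invmx (wgram Y lam) *m col j Y) 0 0 = leverage Y lam j.
Proof.
rewrite tr_col -row_mul /leverage !mxE.
by apply: eq_bigr => l _; rewrite !mxE.
Qed.

Lemma gram_unit k n (Y : 'M[R]_(k, n)) : row_free Y -> Y *m Y^T \in unitmx.
Proof.
move=> Y_free; rewrite -row_free_unit; apply: inj_row_free => v vYY0.
have : (v *m Y) *m (v *m Y)^T = 0 by rewrite trmx_mul !mulmxA -(mulmxA v) vYY0 mul0mx.
move/(congr1 (fun M : 'M[R]_1 => M 0 0)); rewrite !mxE.
under eq_bigr do rewrite [_^T _ _]mxE -expr2.
move/sumr_sqr_eq0 => vY0.
apply: (row_free_inj Y_free); rewrite mul0mx.
by apply/matrixP => i l; rewrite (ord1 i) vY0 mxE.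
Qed.

End WeightedGram.

Lemma bernoulli_ineq {R : realDomainType} (x : R) n :
  -1 <= x -> 1 + n%:R * x <= (1 + x) ^+ n.
Proof.
move=> x_ge; elim: n => [|n IH]; first by rewrite mul0r addr0 expr0.
have x1_ge0 : 0 <= 1 + x by lra.
rewrite exprS; apply: le_trans (ler_wpM2l x1_ge0 IH).
have := mulr_ge0 (ler0n R n) (sqr_ge0 x); rewrite -natr1; nra.
Qed.

(* With [e = dl / (2 (k + 1) (k + 1 + dl))] one has [k e <= 1] and
   [k (k + dl) e <= dl / 2], so Bernoulli's inequality gives
   [(1 - e)^k (1 + e q) >= (1 - k e) (1 + e (k + dl)) >= 1 + e dl / 2]. *)
Lemma design_gain {R : realFieldType} k (dl : R) : 0 < dl -> exists e c : R,
  [/\ 0 < e, e < 1, 0 < c & forall q, k%:R + dl <= q ->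
       1 + c <= (1 - e) ^+ k * (1 + e / (1 - e) * q)].
Proof.
move=> dl_gt0; set x : R := k%:R; have x_ge0 : 0 <= x by [].
set D := 2 * (x + 1) * (x + 1 + dl).
have D_gt0 : 0 < D by rewrite /D; nra.
set e := dl / D.
have eD : e * D = dl by rewrite /e divfK // gt_eqF.
have e_gt0 : 0 < e by rewrite divr_gt0.
have e_lt1 : e < 1 by rewrite ltr_pdivrMr // mul1r /D; nra.
have xe_le1 : x * e <= 1.
  have xeD : x * e * D = x * dl by rewrite -eD mulrA.
  by rewrite -(ler_pM2r D_gt0) xeD /D; nra.
have xxe_le : x * (x + dl) * e <= dl / 2.
  have xxeD : x * (x + dl) * e * D = x * (x + dl) * dl by rewrite -eD mulrA.
  rewrite -(ler_pM2r D_gt0) xxeD.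
  have -> : dl / 2 * D = (x + 1) * (x + 1 + dl) * dl by rewrite /D; field.
  by rewrite ler_wpM2r ?ltW //; nra.
exists e, (e * dl / 2); split => //; first by rewrite divr_gt0 // mulr_gt0.
move=> q q_ge.
have pow_ge : 1 - x * e <= (1 - e) ^+ k.
  by rewrite -mulrN; apply: bernoulli_ineq; lra.
have frac_ge : e <= e / (1 - e).
  by rewrite ler_pdivlMr ?subr_gt0 //; nra.
have q_ge0 : 0 <= q by lra.
have pow_ge0 : 0 <= (1 - e) ^+ k by rewrite exprn_ge0 // subr_ge0 ltW.
have s1 : (1 - x * e) * (1 + e * (x + dl)) <= (1 - x * e) * (1 + e * q).
  by rewrite ler_wpM2l ?subr_ge0 // lerD2l ler_wpM2l // ltW.
have s2 : (1 - x * e) * (1 + e * q) <= (1 - e) ^+ k * (1 + e * q).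
  by rewrite ler_wpM2r //; nra.
have s3 : (1 - e) ^+ k * (1 + e * q) <= (1 - e) ^+ k * (1 + e / (1 - e) * q).
  by rewrite ler_wpM2l // lerD2l ler_wpM2r.
have s4 : e * (x * (x + dl) * e) <= e * (dl / 2) by rewrite ler_wpM2l // ltW.
have s0 : (1 - x * e) * (1 + e * (x + dl)) = 1 + e * dl - e * (x * (x + dl) * e).
  by ring.
lra.
Qed.

Section Design.
Context {R : realType}.

Definition is_subdist {T : finType} (p : T -> R) : Prop :=
  (forall x, 0 <= p x) /\ \sum_x p x <= 1.

Lemma is_subdist_mix {T : finType} (p : T -> R) (e : R) (j : T) :
  is_subdist p -> 0 <= e <= 1 ->
  is_subdist (fun x => (1 - e) * p x + e * (x == j)%:R).
Proof.
move=> [p_ge0 p_le1] /andP[e_ge0 e_le1]; split=> [x|].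
  by rewrite addr_ge0 ?mulr_ge0 ?subr_ge0.
have sum_indicator : \sum_x ((x == j)%:R : R) = 1.
  by rewrite (bigD1 j) //= eqxx big1 ?addr0 // => x /negPf ->.
rewrite big_split /= -!mulr_sumr sum_indicator mulr1.
have : (1 - e) * \sum_x p x <= 1 - e by rewrite ler_piMr ?subr_ge0.
lra.
Qed.

Lemma det_wgram_bounded k n (Y : 'M[R]_(k, n)) :
  exists C, forall lam, is_subdist lam -> `|\det (wgram Y lam)| <= C.
Proof.
pose E p q := \sum_l `|Y p l| * `|Y q l|.
have E_ge0 p q : 0 <= E p q by rewrite sumr_ge0 // => l _; rewrite mulr_ge0.
exists (#|{perm 'I_k}|%:R * (\sum_p \sum_q E p q) ^+ k) => lam [lam_ge0 lam_le1].
apply: det_norm_le => p q; rewrite wgramE.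
apply: le_trans (ler_norm_sum _ _ _) _.
have E_le : E p q <= \sum_p \sum_q E p q.
  apply: le_trans (ler_sum_term q (E_ge0 p)) _.
  by apply: ler_sum_term => p'; rewrite sumr_ge0.
apply: le_trans E_le.
apply: ler_sum => l _; rewrite -mulrA normrM (ger0_norm (lam_ge0 l)) -normrM.
rewrite ler_piMl ?normr_ge0 //; apply: le_trans lam_le1.
exact: ler_sum_term.
Qed.

Lemma det_wgram_mix k n (Y : 'M[R]_(k, n)) lam (e : R) (j : 'I_n) :
  wgram Y lam \in unitmx -> e < 1 ->
  \det (wgram Y (fun l => (1 - e) * lam l + e * (l == j)%:R))
  = (1 - e) ^+ k * \det (wgram Y lam) * (1 + e / (1 - e) * leverage Y lam j).
Proof.
move=> W_unit e_lt1; have e1_neq0 : 1 - e != 0 by rewrite subr_eq0 eq_sym lt_eqF.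
rewrite wgram_mix.
have -> : e *: (col j Y *m (col j Y)^T)
    = (1 - e) *: ((e / (1 - e)) *: (col j Y *m (col j Y)^T)).
  by rewrite scalerA mulrC divfK.
by rewrite -scalerDr detZ det_add_rank1 // leverage_col mulrA.
Qed.

Lemma exists_wgram_det_gt0 k n (Y : 'M[R]_(k, n)) :
  row_free Y -> exists lam, is_subdist lam /\ 0 < `|\det (wgram Y lam)|.
Proof.
move=> Y_free; have n1_gt0 : 0 < n%:R + 1 :> R by rewrite ltr_wpDl.
exists (fun _ => (n%:R + 1)^-1); split; first split=> [l|].
- by rewrite invr_ge0 ltW.
- rewrite sumr_const card_ord -[X in X <= 1]mulr_natl ler_pdivrMr //.
  by rewrite mul1r lerDl.
- rewrite normr_gt0 wgram_const detZ mulf_neq0 ?expf_neq0 ?invr_eq0 ?(gt_eqF n1_gt0) //.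
  by rewrite -unitfE -unitmxE gram_unit.
Qed.

(* Moving mass [e] onto column [j] multiplies the determinant by
   [(1 - e)^k (1 + e / (1 - e) * leverage j)] (det_wgram_mix), which exceeds
   [1 + c] as soon as [leverage j > k + dl] (design_gain); so a design within a
   factor [1 + c] of the supremum of the determinant has all leverages at most
   [k + dl]. *)
Lemma near_optimal_design k n (Y : 'M[R]_(k, n)) (dl : R) :
  row_free Y -> 0 < dl ->
  exists lam : 'I_n -> R, [/\ is_subdist lam, wgram Y lam \in unitmx
    & forall j, leverage Y lam j <= k%:R + dl].
Proof.
move=> Y_free dl_gt0.
have [e [c [e_gt0 e_lt1 c_gt0 gain]]] := design_gain k dl_gt0.
pose S := [set z : R | exists lam, is_subdist lam /\ z = `|\det (wgram Y lam)|].
have S_ub : has_ubound S.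
  by have [C S_le] := det_wgram_bounded Y; exists C => _ [lam [/S_le ? ->]].
have [u [u_sub det_u_gt0]] := exists_wgram_det_gt0 Y_free.
have sup_gt0 : 0 < sup S by apply: lt_le_trans det_u_gt0 (ub_le_sup S_ub _); exists u.
have [_ [lam [lam_sub ->]] det_gt] : exists2 z, S z & sup S / (1 + c) < z.
  apply: sup_gt; first by exists `|\det (wgram Y u)|, u.
  by rewrite ltr_pdivrMr ?ltr_pMr //; lra.
have det_gt0 : 0 < `|\det (wgram Y lam)|.
  by apply: le_lt_trans det_gt; rewrite divr_ge0 ?ltW // ltr_wpDr ?ltW.
have W_unit : wgram Y lam \in unitmx by rewrite unitmxE unitfE -normr_gt0.
exists lam; split => // j; rewrite leNgt; apply/negP => lev_gt.
pose lam' l := (1 - e) * lam l + e * (l == j)%:R.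
have S_lam' : S `|\det (wgram Y lam')|.
  by exists lam'; split => //; apply: is_subdist_mix => //; rewrite !ltW.
have lev_gt0 : 0 < leverage Y lam j.
  by apply: le_lt_trans lev_gt; rewrite addr_ge0 // ltW.
have fac_gt0 : 0 < 1 + e / (1 - e) * leverage Y lam j.
  by rewrite ltr_wpDr // mulr_ge0 ?divr_ge0 ?subr_ge0 // ltW.
have : sup S < `|\det (wgram Y lam')|.
  rewrite det_wgram_mix // !normrM ger0_norm ?exprn_ge0 ?subr_ge0 ?ltW //.
  rewrite (gtr0_norm fac_gt0) mulrAC mulrC; apply: lt_le_trans (_ : `|\det (wgram Y lam)| * (1 + c) <= _).
    by rewrite -ltr_pdivrMr ?ltr_wpDr ?ltW.
  by rewrite ler_wpM2l // gain // ltW.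
by rewrite ltNge ub_le_sup.
Qed.

End Design.

Section Factorization.
Context {R : realType}.

(* With [Y] a row basis of [M], [G = Y diag(lam) Y^T] and [Pi = Y^T G^-1 Y],
   one has [M diag(lam) Pi = M] and [Pi diag(lam) Pi = Pi], so [M] factors as
   [M diag(sqrt lam)] times [(Pi diag(sqrt lam))^T], whose squared row norms
   are at most [B^2] and the leverages [Pi j j]. *)
Lemma bounded_factorization m n (M : 'M[R]_(m, n)) (B dl : R) :
  (forall i j, `|M i j| <= B) -> 0 < dl ->
  exists (U : 'I_m -> 'I_n -> R) (V : 'I_n -> 'I_n -> R),
   [/\ forall i j, M i j = \sum_l U i l * V j l,
       forall i, \sum_l U i l ^+ 2 <= B ^+ 2 &
       forall j, \sum_l V j l ^+ 2 <= (\rank M)%:R + dl].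
Proof.
move=> M_le dl_gt0.
have [lam [[lam_ge0 lam_le1] G_unit lev_le]] :=
  near_optimal_design (row_base_free M) dl_gt0.
move: (mulmx_base M) G_unit lev_le.
move: (col_base M) (row_base M) => C Y CY G_unit lev_le.
set G := wgram Y lam in G_unit lev_le *.
set D := diag_mx (\row_l lam l).
set Pi := Y^T *m invmx G *m Y.
have GD : G = Y *m D *m Y^T by [].
have G_sym : G^T = G.
  by apply/matrixP => p q; rewrite mxE !wgramE; apply: eq_bigr => l _; ring.
have Pi_sym : Pi^T = Pi by rewrite !trmx_mul trmxK trmx_inv G_sym !mulmxA.
have MDPi : M *m D *m Pi = M.
  have : C *m Y *m D *m Pi = C *m (G *m invmx G) *m Y by rewrite /Pi GD !mulmxA.
  by rewrite mulmxV // mulmx1 CY.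
have PiDPi : Pi *m D *m Pi = Pi.
  have -> : Pi *m D *m Pi = Y^T *m (invmx G *m (G *m invmx G)) *m Y.
    by rewrite /Pi GD !mulmxA.
  by rewrite mulmxV // mulmx1.
have lev_Pi j : leverage Y lam j = Pi j j by [].
clearbody Pi.
have sqrt_lam l : Num.sqrt (lam l) ^+ 2 = lam l by rewrite sqr_sqrtr.
exists (fun i l => Num.sqrt (lam l) * M i l), (fun j l => Num.sqrt (lam l) * Pi l j).
split.
- move=> i j; rewrite -{1}MDPi mul_mx_diag !mxE; apply: eq_bigr => l _.
  by rewrite !mxE [RHS]mulrACA -expr2 sqrt_lam; ring.
- move=> i; rewrite -[B ^+ 2]mul1r; apply: le_trans (ler_wpM2r (sqr_ge0 B) lam_le1).
  rewrite mulr_suml; apply: ler_sum => l _; rewrite exprMn sqrt_lam ler_wpM2l //.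
  by rewrite -real_normK ?num_real // lerXn2r ?nnegrE ?normr_ge0 ?(le_trans _ (M_le i l)).
- move=> j; have -> : \sum_l (Num.sqrt (lam l) * Pi l j) ^+ 2 = Pi j j.
    rewrite -[in RHS]PiDPi mul_mx_diag !mxE; apply: eq_bigr => l _.
    have Pi_lj : Pi j l = Pi l j by rewrite -[in LHS]Pi_sym mxE.
    by rewrite !mxE exprMn sqrt_lam Pi_lj; ring.
  by rewrite -lev_Pi lev_le.
Qed.

End Factorization.

Lemma lb_le_mul_inf {R : realType} (E : set R) (x c : R) :
  E !=set0 -> 0 <= c -> (forall y, E y -> x <= c * y) -> x <= c * inf E.
Proof.
move=> [y0 Ey0] c_ge0 x_le.
have [c0 | c_neq0] := eqVneq c 0; first by have := x_le _ Ey0; rewrite c0 !mul0r.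
have c_gt0 : 0 < c by rewrite lt_def c_neq0.
rewrite mulrC -ler_pdivrMr //; apply: lb_le_inf; first by exists y0.
by move=> y /x_le; rewrite ler_pdivrMr // mulrC.
Qed.

Section OperatorNorm.
Context {R : realType} {I J : finType}.
Implicit Types (G M : I -> J -> R) (x : J -> R).

Lemma opnorm_has_ub G :
  has_ubound [set y : R | exists x : J -> R, \sum_a x a ^+ 2 <= 1 /\
                 y = l2norm (fun s => \sum_a G s a * x a)].
Proof.
exists (Num.sqrt (\sum_s \sum_a G s a ^+ 2)) => _ [x [x_le1 ->]].
rewrite ler_sqrt; last by rewrite sumr_ge0 // => s _; exact: sumr_sqr_ge0.
apply: ler_sum => s _; apply: le_trans (cauchy_schwarz_sqr _ _) _.
by rewrite -[X in _ <= X]mulr1 ler_wpM2l ?sumr_sqr_ge0.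
Qed.

Lemma opnorm_ge0 G : 0 <= opnorm G.
Proof.
apply: le_trans (ub_le_sup (opnorm_has_ub G) _); last first.
  exists (fun _ => 0); split; last by [].
  by rewrite big1 // => a _; rewrite expr0n.
exact: l2norm_ge0.
Qed.

Lemma l2norm_apply_le G x :
  l2norm (fun s => \sum_a G s a * x a) <= opnorm G * l2norm x.
Proof.
have [x_eq0 | x_neq0] := eqVneq (\sum_a x a ^+ 2) 0.
  rewrite /l2norm x_eq0 sqrtr0 mulr0 big1 ?sqrtr0 // => s _.
  by rewrite big1 ?expr0n // => a _; rewrite (sumr_sqr_eq0 x_eq0) mulr0.
have N_gt0 : 0 < l2norm x.
  by rewrite sqrtr_gt0 lt_def x_neq0 sumr_sqr_ge0.
set N := l2norm x.
rewrite -ler_pdivrMr //; apply: (ub_le_sup (opnorm_has_ub G)).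
exists (fun a => x a / N); split.
  have -> : \sum_a (x a / N) ^+ 2 = (\sum_a x a ^+ 2) / N ^+ 2.
    by rewrite mulr_suml; apply: eq_bigr => a _; rewrite expr_div_n.
  by rewrite sqr_sqrtr ?sumr_sqr_ge0 // divff.
rewrite /l2norm.
have -> : \sum_s (\sum_a G s a * (x a / N)) ^+ 2
          = (\sum_s (\sum_a G s a * x a) ^+ 2) * (N^-1) ^+ 2.
  rewrite mulr_suml; apply: eq_bigr => s _; rewrite -exprMn mulr_suml.
  by congr (_ ^+ 2); apply: eq_bigr => a _; rewrite mulrA.
by rewrite sqrtrM ?sumr_sqr_ge0 // sqrtr_sqr ger0_norm // invr_ge0 ltW.
Qed.

End OperatorNorm.

Section RowNorm.
Context {R : realType} {T : finType} {k : nat}.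
Implicit Type U : T -> 'I_k -> R.

Lemma rownorm_max_ge0 U : 0 <= rownorm_max U.
Proof. exact: bigmax_ge_id. Qed.

Lemma l2norm_le_rownorm_max U s : l2norm (U s) <= rownorm_max U.
Proof. exact: (le_bigmax _ (fun x => l2norm (U x))). Qed.

Lemma rownorm_max_le U b :
  0 <= b -> (forall s, l2norm (U s) <= b) -> rownorm_max U <= b.
Proof. by move=> b_ge0 U_le; apply: bigmax_le => // s _; exact: U_le. Qed.

Lemma l2norm_cols_le U :
  Num.sqrt (\sum_i \sum_s U s i ^+ 2) <= Num.sqrt #|T|%:R * rownorm_max U.
Proof.
have rmax_ge0 := rownorm_max_ge0 U.
rewrite exchange_big /= -[rownorm_max U]ger0_norm // -sqrtr_sqr -sqrtrM //.
rewrite ler_sqrt ?mulr_ge0 ?sqr_ge0 // -sum1_card natr_sum mulr_suml.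
apply: ler_sum => s _; rewrite mul1r -(sqr_sqrtr (sumr_sqr_ge0 (U s))).
by rewrite lerXn2r ?nnegrE ?l2norm_ge0 ?l2norm_le_rownorm_max.
Qed.

End RowNorm.

Section MaxNorm.
Context {R : realType} {I J : finType}.
Implicit Types (G M : I -> J -> R).

Lemma inner_le_factor G M k (U : I -> 'I_k -> R) (V : J -> 'I_k -> R) :
  (forall s a, M s a = \sum_i U s i * V a i) ->
  `|\sum_s \sum_a G s a * M s a|
  <= opnorm G * (Num.sqrt #|I|%:R * rownorm_max U) * (Num.sqrt #|J|%:R * rownorm_max V).
Proof.
move=> M_UV.
have -> : \sum_s \sum_a G s a * M s a = \sum_i \sum_s U s i * (\sum_a G s a * V a i).
  transitivity (\sum_s \sum_i \sum_a G s a * (U s i * V a i)).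
    apply: eq_bigr => s _; rewrite exchange_big; apply: eq_bigr => a _.
    by rewrite M_UV mulr_sumr.
  rewrite exchange_big; apply: eq_bigr => i _; apply: eq_bigr => s _.
  by rewrite mulr_sumr; apply: eq_bigr => a _; ring.
pose al i := l2norm (fun s => U s i); pose be i := l2norm (fun a => V a i).
have l2norm_sqr (T : finType) (W : T -> 'I_k -> R) i :
    l2norm (fun x => W x i) ^+ 2 = \sum_x W x i ^+ 2.
  by rewrite sqr_sqrtr ?sumr_sqr_ge0.
apply: le_trans (ler_norm_sum _ _ _) _.
apply: (@le_trans _ _ (\sum_i al i * (opnorm G * be i))).
  apply: ler_sum => i _; apply: le_trans (cauchy_schwarz _ _) _.
  by rewrite ler_wpM2l ?l2norm_ge0 // l2norm_apply_le.
rewrite -mulrA (eq_bigr _ (fun i _ => mulrCA _ _ _)) -mulr_sumr.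
rewrite ler_wpM2l ?opnorm_ge0 //; apply: le_trans (ler_norm _) _.
apply: le_trans (cauchy_schwarz al be) _.
apply: ler_pM; rewrite ?l2norm_ge0 //.
- by rewrite /l2norm (eq_bigr _ (fun i _ => l2norm_sqr _ U i)) l2norm_cols_le.
- by rewrite /l2norm (eq_bigr _ (fun i _ => l2norm_sqr _ V i)) l2norm_cols_le.
Qed.

Definition factorization_norms M : set R :=
  [set y : R | exists (k : nat) (U : I -> 'I_k -> R) (V : J -> 'I_k -> R),
     (forall s a, M s a = \sum_(i < k) U s i * V a i) /\
     y = rownorm_max U * rownorm_max V].

Lemma maxnormE M : maxnorm M = inf (factorization_norms M).
Proof. by []. Qed.

Lemma factorization_norms_nonempty M : factorization_norms M !=set0.
Proof.
exists (rownorm_max (fun s (i : 'I_#|J|) => M s (enum_val i)) *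
        rownorm_max (fun a (i : 'I_#|J|) => ((a == enum_val i)%:R : R))).
exists #|J|, (fun s i => M s (enum_val i)), (fun a i => (a == enum_val i)%:R).
split=> // s a; rewrite (bigD1 (enum_rank a)) //= enum_rankK eqxx mulr1 big1 ?addr0 //.
move=> i i_neq; case: eqP => [a_i | _]; last by rewrite mulr0.
by move: i_neq; rewrite a_i enum_valK eqxx.
Qed.

Lemma maxnorm_ge0 M : 0 <= maxnorm M.
Proof.
rewrite maxnormE; apply: lb_le_inf (factorization_norms_nonempty M) _.
by move=> _ [k [U [V [_ ->]]]]; rewrite mulr_ge0 ?rownorm_max_ge0.
Qed.

Lemma maxnorm_le_factor M k (U : I -> 'I_k -> R) (V : J -> 'I_k -> R) :
  (forall s a, M s a = \sum_i U s i * V a i) ->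
  maxnorm M <= rownorm_max U * rownorm_max V.
Proof.
move=> M_UV; rewrite maxnormE; apply: ge_inf; last by exists k, U, V.
by exists 0 => _ [k' [U' [V' [_ ->]]]]; rewrite mulr_ge0 ?rownorm_max_ge0.
Qed.

Lemma inner_le_opnorm_maxnorm G M :
  `|\sum_s \sum_a G s a * M s a|
  <= opnorm G * Num.sqrt #|I|%:R * Num.sqrt #|J|%:R * maxnorm M.
Proof.
rewrite maxnormE; apply: lb_le_mul_inf (factorization_norms_nonempty M) _ _.
  by rewrite !mulr_ge0 ?sqrtr_ge0 ?opnorm_ge0.
move=> _ [k [U [V [M_UV ->]]]].
have -> : opnorm G * Num.sqrt #|I|%:R * Num.sqrt #|J|%:R * (rownorm_max U * rownorm_max V)
    = opnorm G * (Num.sqrt #|I|%:R * rownorm_max U) * (Num.sqrt #|J|%:R * rownorm_max V).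
  by ring.
exact: inner_le_factor.
Qed.

Lemma maxnorm_le_sqrt_rankD M (B dl : R) :
  0 <= B -> (forall s a, `|M s a| <= B) -> 0 < dl ->
  maxnorm M <= B * Num.sqrt ((\rank (mx_of M))%:R + dl).
Proof.
move=> B_ge0 M_le dl_gt0; have mx_le i j : `|mx_of M i j| <= B by rewrite mxE.
have [U [V [M_UV U_le V_le]]] := bounded_factorization mx_le dl_gt0.
pose U' s := U (enum_rank s); pose V' a := V (enum_rank a).
have M_UV' s a : M s a = \sum_i U' s i * V' a i by rewrite -M_UV mxE !enum_rankK.
apply: le_trans (maxnorm_le_factor M_UV') _.
apply: ler_pM; rewrite ?rownorm_max_ge0 //; apply: rownorm_max_le.
- by [].
- by move=> s; rewrite -(ger0_norm B_ge0) -sqrtr_sqr /l2norm ler_sqrt ?sqr_ge0 ?U_le.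
- exact: sqrtr_ge0.
- move=> a; rewrite /l2norm ler_sqrt ?addr_ge0 ?(ltW dl_gt0) //.
  exact: V_le.
Qed.

Lemma maxnorm_le_sqrt_rank M (B : R) :
  0 <= B -> (forall s a, `|M s a| <= B) ->
  maxnorm M <= Num.sqrt (\rank (mx_of M))%:R * B.
Proof.
move=> B_ge0 M_le; apply/ler_addgt0Pr => eps eps_gt0.
set r : R := (\rank (mx_of M))%:R; have r_ge0 : 0 <= r by [].
set eta := eps / (B + 1).
have eta_gt0 : 0 < eta by rewrite divr_gt0 // ltr_wpDl.
have B_eta : B * eta <= eps.
  by rewrite /eta mulrA ler_pdivrMr ?ltr_wpDl // mulrC ler_pM2l // lerDl.
set dl := 2 * eta * Num.sqrt r + eta ^+ 2.
have dl_gt0 : 0 < dl.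
  by rewrite ltr_wpDl ?exprn_gt0 // mulr_ge0 ?sqrtr_ge0 // mulr_ge0 // ltW.
have sqrt_r_dl : Num.sqrt (r + dl) = Num.sqrt r + eta.
  rewrite (_ : r + dl = (Num.sqrt r + eta) ^+ 2); last by rewrite /dl sqrrD sqr_sqrtr //; ring.
  by rewrite sqrtr_sqr ger0_norm // addr_ge0 ?sqrtr_ge0 ?ltW.
apply: le_trans (maxnorm_le_sqrt_rankD B_ge0 M_le dl_gt0) _.
by rewrite sqrt_r_dl mulrDr mulrC lerD2l.
Qed.

End MaxNorm.

Section Discrepancy.
Context {R : realType} {St Ac : finType}.

Lemma inner_le_Dis (rho q Q Y : St -> Ac -> R) (b : R) :
  is_dist2 rho -> (forall s a, rho s a != 0 -> Q s a = Y s a) ->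
  maxnorm Q <= b -> maxnorm Y <= b ->
  `|\sum_s \sum_a q s a * (Q s a - Y s a)|
  <= 2 * b * Num.sqrt #|St|%:R * Num.sqrt #|Ac|%:R * Dis rho q.
Proof.
move=> rho_dist QY Q_le Y_le; have b_ge0 := le_trans (maxnorm_ge0 Y) Y_le.
apply: lb_le_mul_inf; first by exists (opnorm (fun s a => rho s a - q s a)), rho.
  by rewrite !mulr_ge0 ?sqrtr_ge0.
move=> _ [g [g_dist [g_supp ->]]]; set D := fun s a => g s a - q s a.
have g_perp : \sum_s \sum_a g s a * (Q s a - Y s a) = 0.
  apply: big1 => s _; apply: big1 => a _.
  have [-> | /g_supp /QY ->] := eqVneq (g s a) 0; first by rewrite mul0r.
  by rewrite subrr mulr0.
have -> : \sum_s \sum_a q s a * (Q s a - Y s a)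
    = \sum_s \sum_a D s a * Y s a - \sum_s \sum_a D s a * Q s a.
  transitivity (\sum_s \sum_a q s a * (Q s a - Y s a)
                - \sum_s \sum_a g s a * (Q s a - Y s a)); first by rewrite g_perp subr0.
  rewrite -!sumrB; apply: eq_bigr => s _.
  by rewrite -!sumrB; apply: eq_bigr => a _; rewrite /D; ring.
set K := opnorm D * Num.sqrt #|St|%:R * Num.sqrt #|Ac|%:R.
have K_ge0 : 0 <= K by rewrite !mulr_ge0 ?sqrtr_ge0 ?opnorm_ge0.
apply: le_trans (ler_normB _ _) _.
have := inner_le_opnorm_maxnorm D Y; have := inner_le_opnorm_maxnorm D Q.
rewrite -/K => DQ_le DY_le.
have : K * maxnorm Q <= K * b by rewrite ler_wpM2l.
have : K * maxnorm Y <= K * b by rewrite ler_wpM2l.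
have -> : 2 * b * Num.sqrt #|St|%:R * Num.sqrt #|Ac|%:R * opnorm D = 2 * (K * b).
  by rewrite /K; ring.
lra.
Qed.

End Discrepancy.

Lemma norm_expect_le {R : realType} {T : finType} (p f : T -> R) (b : R) :
  is_dist p -> (forall x, `|f x| <= b) -> `|\sum_x p x * f x| <= b.
Proof.
move=> [p_ge0 p_sum1] f_le; apply: le_trans (ler_norm_sum _ _ _) _.
rewrite -[b]mul1r -p_sum1 mulr_suml; apply: ler_sum => x _.
by rewrite normrM ger0_norm // ler_wpM2l.
Qed.

Lemma exchange_big_pair {R : zmodType} {I J K L : finType} (F : I -> J -> K -> L -> R) :
  \sum_i \sum_j \sum_k \sum_l F i j k l = \sum_k \sum_l \sum_i \sum_j F i j k l.
Proof.
transitivity (\sum_i \sum_k \sum_l \sum_j F i j k l).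
  apply: eq_bigr => i _; rewrite exchange_big; apply: eq_bigr => k _.
  exact: exchange_big.
rewrite exchange_big; apply: eq_bigr => k _; exact: exchange_big.
Qed.

Section Occupancy.
Context {R : realType} {St Ac : finType}.
Variables (mu1 : St -> R) (P : nat -> St -> Ac -> St -> R) (pi : nat -> St -> Ac -> R).

Lemma occ_flow t (Q : St -> Ac -> R) :
  \sum_s \sum_a occ mu1 P pi t.+1 s a *
     (\sum_s' \sum_a' P t.+1 s a s' * pi t.+2 s' a' * Q s' a')
  = \sum_s' \sum_a' occ mu1 P pi t.+2 s' a' * Q s' a'.
Proof.
rewrite /occ /=.
transitivity (\sum_s \sum_a \sum_s' \sum_a'
   (state_dist mu1 P pi t s * pi t.+1 s a * P t.+1 s a s') * (pi t.+2 s' a' * Q s' a')).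
  apply: eq_bigr => s _; apply: eq_bigr => a _; rewrite mulr_sumr.
  by apply: eq_bigr => s' _; rewrite mulr_sumr; apply: eq_bigr => a' _; ring.
rewrite exchange_big_pair; apply: eq_bigr => s' _; apply: eq_bigr => a' _.
by rewrite -mulrA mulr_suml; apply: eq_bigr => s _; rewrite mulr_suml.
Qed.

Variable H : nat.
Hypotheses (mu1_dist : is_dist mu1)
  (P_dist : forall t, (1 <= t <= H)%N -> forall s a, is_dist (P t s a))
  (pi_dist : forall t, (1 <= t <= H)%N -> forall s, is_dist (pi t s)).

Lemma state_dist_dist n : (n < H)%N -> is_dist (state_dist mu1 P pi n).
Proof.
elim: n => [|n IH] n_lt //=; have [sd_ge0 sd_sum1] := IH (ltnW n_lt).
have t_in : (1 <= n.+1 <= H)%N by rewrite ltnS leq0n ltnW.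
split=> [s'|].
  apply: sumr_ge0 => s _; apply: sumr_ge0 => a _.
  by rewrite !mulr_ge0 //; [case: (pi_dist t_in s) | case: (P_dist t_in s a)].
rewrite exchange_big /= -[RHS]sd_sum1; apply: eq_bigr => s _.
rewrite exchange_big /= -[RHS]mulr1 -(pi_dist t_in s).2 mulr_sumr.
apply: eq_bigr => a _.
by rewrite -mulr_sumr (P_dist t_in s a).2 mulr1.
Qed.

Lemma occ_dist t : (1 <= t <= H)%N -> is_dist2 (occ mu1 P pi t).
Proof.
move=> t_in; have [sd_ge0 sd_sum1] : is_dist (state_dist mu1 P pi t.-1).
  by apply: state_dist_dist; case: t t_in => // t /andP[].
split=> [s a|]; first by rewrite mulr_ge0 //; case: (pi_dist t_in s).
rewrite -[RHS]sd_sum1; apply: eq_bigr => s _.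
by rewrite -mulr_sumr (pi_dist t_in s).2 mulr1.
Qed.

End Occupancy.

Section Bellman.
Context {R : realType} {St Ac : finType}.
Implicit Types (P : nat -> St -> Ac -> St -> R) (r pi Q : nat -> St -> Ac -> R).

Definition backup P r pi Q (t : nat) : St -> Ac -> R :=
  fun s a => r t s a + \sum_s' \sum_a' P t s a s' * pi t.+1 s' a' * Q t.+1 s' a'.

Lemma value_telescope H (mu1 : St -> R) P r pi Q :
  (forall s a, Q H.+1 s a = 0) ->
  \sum_s \sum_a mu1 s * pi 1%N s a * Q 1%N s a - value H mu1 P r pi
  = \sum_(1 <= t < H.+1) \sum_s \sum_a
        occ mu1 P pi t s a * (Q t s a - backup P r pi Q t s a).
Proof.
move=> Q_end; pose A t := \sum_s \sum_a occ mu1 P pi t s a * Q t s a.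
have step t : (1 <= t < H.+1)%N ->
    \sum_s \sum_a occ mu1 P pi t s a * (Q t s a - backup P r pi Q t s a)
    = (A t - A t.+1) - \sum_s \sum_a occ mu1 P pi t s a * r t s a.
  case: t => // t _; rewrite /A -(occ_flow _ _ _ _ (Q t.+2)) -!sumrB.
  apply: eq_bigr => s _; rewrite -!sumrB; apply: eq_bigr => a _.
  by rewrite /backup; ring.
have A_end : A H.+1 = 0.
  by rewrite /A big1 // => s _; rewrite big1 // => a _; rewrite Q_end mulr0.
have telescope : \sum_(1 <= t < H.+1) (A t - A t.+1) = A 1%N.
  rewrite (eq_bigr (fun t => - (A t.+1 - A t))) => [|t _]; last by rewrite opprB.
  by rewrite sumrN telescope_sumr // A_end sub0r opprK.
by rewrite (eq_big_nat _ _ step) sumrB telescope.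
Qed.

Lemma rank_mx_of_factor (W : St -> Ac -> R) k (f : St -> 'I_k -> R) (g : Ac -> 'I_k -> R) :
  (forall s a, W s a = \sum_i f s i * g a i) -> (\rank (mx_of W) <= k)%N.
Proof.
move=> W_fg.
have -> : mx_of W = (\matrix_(x, i) f (enum_val x) i) *m (\matrix_(i, y) g (enum_val y) i).
  by apply/matrixP => x y; rewrite !mxE W_fg; apply: eq_bigr => i _; rewrite !mxE.
exact: leq_trans (mxrankM_maxl _ _) (rank_leq_col _).
Qed.

Lemma rank_transition_apply_le k (Pt : St -> Ac -> St -> R) (V : St -> R) :
  ((exists (u : 'I_k -> St -> St -> R) (w : 'I_k -> Ac -> R),
      forall s' s a, Pt s a s' = \sum_i u i s' s * w i a) \/
   (exists (u : 'I_k -> St -> R) (w : 'I_k -> St -> Ac -> R),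
      forall s' s a, Pt s a s' = \sum_i u i s * w i s' a)) ->
  (\rank (mx_of (fun s a => (\sum_s' Pt s a s' * V s')%R)) <= k)%N.
Proof.
case=> [[u [w Pt_uw]] | [u [w Pt_uw]]].
- apply: (rank_mx_of_factor (f := fun s i => \sum_s' u i s' s * V s') (g := fun a i => w i a)).
  move=> s a; under eq_bigr do rewrite Pt_uw mulr_suml.
  rewrite exchange_big; apply: eq_bigr => i _; rewrite mulr_suml.
  by apply: eq_bigr => s' _; ring.
- apply: (rank_mx_of_factor (f := fun s i => u i s) (g := fun a i => \sum_s' w i s' a * V s')).
  move=> s a; under eq_bigr do rewrite Pt_uw mulr_suml.
  rewrite exchange_big; apply: eq_bigr => i _; rewrite mulr_sumr.
  by apply: eq_bigr => s' _; ring.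
Qed.

Lemma rank_backup_le H d P r pi Q t :
  low_rank H d P r -> (1 <= t <= H)%N -> (\rank (mx_of (backup P r pi Q t)) <= d)%N.
Proof.
move=> P_r_low t_in; have [r_rank P_low] := P_r_low t t_in.
pose V s' := \sum_a' pi t.+1 s' a' * Q t.+1 s' a'.
have -> : mx_of (backup P r pi Q t)
    = mx_of (r t) + mx_of (fun s a => \sum_s' P t s a s' * V s').
  apply/matrixP => x y; rewrite !mxE; congr (_ + _); apply: eq_bigr => s' _.
  by rewrite mulr_sumr; apply: eq_bigr => a' _; rewrite mulrA.
apply: leq_trans (mxrank_add _ _) _.
apply: leq_trans (leq_add r_rank (rank_transition_apply_le V P_low)) _.
by rewrite addnn -[X in (_ <= X)%N](odd_double_half d) leq_addl.
Qed.

End Bellman.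

Section EvaluationError.
Context {R : realType} {St Ac : finType}.
Variables (H d : nat) (mu1 : St -> R) (P Phat : nat -> St -> Ac -> St -> R).
Variables (r piT piB Qhat : nat -> St -> Ac -> R).
Hypotheses (mu1_dist : is_dist mu1)
  (P_dist : forall t, (1 <= t <= H)%N -> forall s a, is_dist (P t s a))
  (r_01 : forall t, (1 <= t <= H)%N -> forall s a, 0 <= r t s a <= 1)
  (piT_dist : forall t, (1 <= t <= H)%N -> forall s, is_dist (piT t s))
  (piB_dist : forall t, (1 <= t <= H)%N -> forall s, is_dist (piB t s))
  (P_r_low : low_rank H d P r)
  (Phat_P : forall t, (1 <= t <= H)%N -> forall s a,
      occ mu1 P piB t s a != 0 -> forall s', Phat t s a s' = P t s a s')
  (Qhat_end : forall s a, Qhat H.+1 s a = 0)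
  (Qhat_ME : forall t, (1 <= t <= H)%N ->
      ME_output H t (occ mu1 P piB t) (backup Phat r piT Qhat t) (Qhat t)).

Lemma expect_Qhat_succ_le t s' : (1 <= t <= H)%N ->
  `|\sum_a' piT t.+1 s' a' * Qhat t.+1 s' a'| <= H%:R - t%:R.
Proof.
case/andP=> _; rewrite leq_eqVlt => /orP[/eqP-> | t_lt].
  by rewrite subrr big1 ?normr0 // => a' _; rewrite Qhat_end mulr0.
have t1_in : (1 <= t.+1 <= H)%N by rewrite t_lt.
apply: norm_expect_le (piT_dist t1_in s') _ => a'.
by have [[_ /(_ s' a')]] := Qhat_ME t1_in; rewrite -natr1; lra.
Qed.

Lemma backup_norm_le t s a : (1 <= t <= H)%N ->
  `|backup P r piT Qhat t s a| <= H%:R - t%:R + 1.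
Proof.
move=> t_in; apply: le_trans (ler_normD _ _) _.
have /andP[r_ge0 r_le1] := r_01 t_in s a.
rewrite ger0_norm // [X in _ <= X]addrC lerD //.
have -> : \sum_s' \sum_a' P t s a s' * piT t.+1 s' a' * Qhat t.+1 s' a'
    = \sum_s' P t s a s' * \sum_a' piT t.+1 s' a' * Qhat t.+1 s' a'.
  by apply: eq_bigr => s' _; rewrite mulr_sumr; apply: eq_bigr => a' _; rewrite mulrA.
by apply: norm_expect_le (P_dist t_in s a) _ => s'; exact: expect_Qhat_succ_le.
Qed.

Lemma backup_feasible t : (1 <= t <= H)%N ->
  ME_feasible H t (occ mu1 P piB t) (backup Phat r piT Qhat t) (backup P r piT Qhat t).
Proof.
move=> t_in; split=> [s a occ_neq0 | s a]; last exact: backup_norm_le.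
rewrite /backup; congr (_ + _); apply: eq_bigr => s' _; apply: eq_bigr => a' _.
by rewrite Phat_P.
Qed.

Lemma maxnorm_backup_le t : (1 <= t <= H)%N ->
  maxnorm (backup P r piT Qhat t) <= Num.sqrt d%:R * H%:R.
Proof.
move=> t_in; have /andP[t_ge1 t_le] := t_in.
have bound_ge0 : 0 <= H%:R - t%:R + 1 :> R by rewrite addr_ge0 // subr_ge0 ler_nat.
apply: le_trans (maxnorm_le_sqrt_rank bound_ge0 (fun s a => backup_norm_le s a t_in)) _.
rewrite ler_pM ?sqrtr_ge0 // ?ler_sqrt ?ler_nat ?(rank_backup_le _ _ P_r_low t_in) //.
have : (1 : R) <= t%:R by rewrite ler1n.
lra.
Qed.

Lemma bellman_error_le t : (1 <= t <= H)%N ->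
  `|\sum_s \sum_a occ mu1 P piT t s a * (Qhat t s a - backup P r piT Qhat t s a)|
  <= 2 * H%:R * Num.sqrt (d%:R * #|St|%:R * #|Ac|%:R) *
     Dis (occ mu1 P piB t) (occ mu1 P piT t).
Proof.
move=> t_in; have [[Qhat_eq _] Qhat_min] := Qhat_ME t_in.
have Y_le := maxnorm_backup_le t_in.
have Q_le := le_trans (Qhat_min _ (backup_feasible t_in)) Y_le.
have Y_eq s a : occ mu1 P piB t s a != 0 -> Qhat t s a = backup P r piT Qhat t s a.
  by move=> occ_neq0; rewrite Qhat_eq // (backup_feasible t_in).1.
have -> : 2 * H%:R * Num.sqrt (d%:R * #|St|%:R * #|Ac|%:R)
    = 2 * (Num.sqrt d%:R * H%:R) * Num.sqrt #|St|%:R * Num.sqrt #|Ac|%:R :> R.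
  by rewrite !sqrtrM ?mulr_ge0 //; ring.
exact: inner_le_Dis (occ_dist mu1_dist P_dist piB_dist t_in) Y_eq Q_le Y_le.
Qed.

End EvaluationError.

Local Close Scope classical_set_scope.

Theorem theorem1 (R : realType) (St Ac : finType) (H d : nat)
  (mu1 : St -> R) (P : nat -> St -> Ac -> St -> R) (r : nat -> St -> Ac -> R)
  (piT piB : nat -> St -> Ac -> R)
  (Phat : nat -> St -> Ac -> St -> R) (Qhat : nat -> St -> Ac -> R) :
  is_dist mu1 ->
  (forall t, (1 <= t <= H)%N -> forall s a, is_dist (P t s a)) ->
  (forall t, (1 <= t <= H)%N -> forall s a, 0 <= r t s a <= 1) ->
  (forall t, (1 <= t <= H)%N -> forall s, is_dist (piT t s)) ->
  (forall t, (1 <= t <= H)%N -> forall s, is_dist (piB t s)) ->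
  low_rank H d P r ->
  (* infinite-sample setting: Phat_t = P_t on supp(d_t^{pi^beta}) *)
  (forall t, (1 <= t <= H)%N -> forall s a,
      occ mu1 P piB t s a != 0 -> forall s', Phat t s a s' = P t s a s') ->
  (* the evaluation algorithm with rho_t = d_t^{pi^beta} *)
  (forall s a, Qhat H.+1 s a = 0) ->
  (forall t, (1 <= t <= H)%N ->
      ME_output H t (occ mu1 P piB t)
        (fun s a => r t s a + \sum_(s' : St) \sum_(a' : Ac)
                      Phat t s a s' * piT t.+1 s' a' * Qhat t.+1 s' a')
        (Qhat t)) ->
  `| \sum_(s : St) \sum_(a : Ac) mu1 s * piT 1%N s a * Qhat 1%N s a
     - value H mu1 P r piT |
  <= 2 * H%:R * Num.sqrt (d%:R * #|St|%:R * #|Ac|%:R) *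
     \sum_(1 <= t < H.+1) Dis (occ mu1 P piB t) (occ mu1 P piT t).
Proof.
move=> mu1_dist P_dist r_01 piT_dist piB_dist P_r_low Phat_P Qhat_end Qhat_ME.
rewrite value_telescope // mulr_sumr; apply: le_trans (ler_norm_sum _ _ _) _.
apply: ler_sum_nat => t /andP[t_ge1]; rewrite ltnS => t_le.
have t_in : (1 <= t <= H)%N by rewrite t_ge1.
exact: (bellman_error_le mu1_dist P_dist r_01 piT_dist piB_dist P_r_low Phat_P
          Qhat_end Qhat_ME t_in).
Qed.
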